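(* If a $T_1$-space $X$ has a strong development at non-isolated points, then $X$ is monotonically normal and paracompact.
   Context: $I(X)$ is the set of isolated points, $\mathcal{I}(X)=\{\{x\}:x\in I(X)\}$, and $\mathrm{st}(A,\mathcal{W})=\bigcup\{W\in\mathcal{W}:W\cap A\neq\emptyset\}$. A sequence $\{\mathcal{W}_i\}_{i\in\mathbb{N}}$ of open covers of $X$ with $\mathcal{I}(X)\subset\bigcup_i\mathcal{W}_i$ is a strong development at non-isolated points if for every $x\in X\setminus I(X)$ and every neighborhood $U$ of $x$ there are a neighborhood $V$ of $x$ and $i\in\mathbb{N}$ with $\mathrm{st}(V,\mathcal{W}_i)\subset U$. $X$ is monotonically normal if to each pair $(p,C)$ with $C$ closed and $p\notin C$ one can assign an open set $H(p,C)$ with (i) $p\in H(p,C)\subset X\setminus C$; (ii) if $D\subset C$ is closed then $H(p,C)\subset H(p,D)$; (iii) if $p\neq q$ then $H(p,\{q\})\cap H(q,\{p\})=\emptyset$. *)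

From Stdlib Require Import List.

Definition set (X : Type) := X -> Prop.
Definition subset {X : Type} (A B : set X) : Prop := forall x, A x -> B x.
Definition singleton {X : Type} (x : X) : set X := fun y => y = x.
Definition setC {X : Type} (A : set X) : set X := fun x => ~ A x.
Definition meets {X : Type} (A B : set X) : Prop := exists x, A x /\ B x.

Record topology (X : Type) : Type := Topology {
  is_open : set X -> Prop;
  open_full : is_open (fun _ => True);
  open_empty : is_open (fun _ => False);
  open_inter : forall A B, is_open A -> is_open B -> is_open (fun x => A x /\ B x);
  open_union : forall (F : set X -> Prop),
      (forall A, F A -> is_open A) -> is_open (fun x => exists A, F A /\ A x)
}.
Arguments is_open {X} t A.

Definition is_closed {X : Type} (t : topology X) (C : set X) : Prop :=
  is_open t (setC C).

Definition T1 {X : Type} (t : topology X) : Prop :=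
  forall x : X, is_closed t (singleton x).

Definition isolated {X : Type} (t : topology X) (x : X) : Prop :=
  is_open t (singleton x).

Definition open_cover {X : Type} (t : topology X) (W : set X -> Prop) : Prop :=
  (forall A, W A -> is_open t A) /\ (forall x, exists A, W A /\ A x).

Definition star {X : Type} (A : set X) (W : set X -> Prop) : set X :=
  fun z => exists B, W B /\ meets B A /\ B z.

Definition strong_development_nonisolated {X : Type} (t : topology X)
    (W : nat -> (set X -> Prop)) : Prop :=
  (forall i, open_cover t (W i)) /\
  (forall x, isolated t x -> exists i, W i (singleton x)) /\
  (forall x, ~ isolated t x ->
     forall U, is_open t U -> U x ->
       exists V i, is_open t V /\ V x /\ subset (star V (W i)) U).

Definition has_strong_development_nonisolated {X : Type} (t : topology X) : Prop :=
  exists W, strong_development_nonisolated t W.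

Definition monotonically_normal {X : Type} (t : topology X) : Prop :=
  exists H : X -> set X -> set X,
    (forall p C, is_closed t C -> ~ C p ->
       is_open t (H p C) /\ H p C p /\ subset (H p C) (setC C)) /\
    (forall p C D, is_closed t C -> ~ C p -> is_closed t D -> subset D C ->
       subset (H p C) (H p D)) /\
    (forall p q, p <> q ->
       forall z, ~ (H p (singleton q) z /\ H q (singleton p) z)).

Definition locally_finite {X : Type} (t : topology X) (F : set X -> Prop) : Prop :=
  forall x, exists N, is_open t N /\ N x /\
    exists l : list (set X), forall A, F A -> meets A N -> In A l.

Definition paracompact {X : Type} (t : topology X) : Prop :=
  forall U, open_cover t U ->
    exists V, open_cover t V /\ locally_finite t V /\
      (forall B, V B -> exists A, U A /\ subset B A).

(* Let (W_i) be the development and G_n = W_0 ∧ ... ∧ W_n the common refinement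
   of its first covers; write σ_n(A) = st(A, G_n).  These stars decrease in n,
   and the defining property of the development iterates: for a non-isolated x,
   every neighbourhood of x contains σ_n^k({x}) for all large n.

   Monotone normality: H(p, C) = {p} for isolated p, and otherwise σ_n({p})
   for the least n such that σ_n(σ_n({p})) misses C.

   Paracompactness is a Stone-type construction.  Well-order the given open
   cover U and let s(x) be the first member of U containing x.  At stage n,
   every point x not covered by the earlier stages and with σ_n^4({x}) ⊆ s(x)
   contributes σ_n({x}) to the piece V(n, s(x)).  The pieces are open, refine
   U, cover the non-isolated points and are locally finite there: a small star
   of a point meets no piece of a late stage and at most one piece per early
   stage.  A general completion lemma then adds singletons of isolated points
   and yields a locally finite open refinement of U. *)

From Stdlib Require Import List Arith Lia Classical FunctionalExtensionality PropExtensionality.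
From mathcomp Require ssreflect ssrbool eqtype boolp wochoice.

Module WellOrdering.
Import ssreflect ssrbool eqtype boolp wochoice.

Lemma well_ordering (T : Type) :
  exists R : T -> T -> Prop,
    (forall a b, R a b -> R b a -> a = b) /\
    (forall P : T -> Prop, (exists x, P x) -> exists z, P z /\ forall y, P y -> R z y).
Proof.
have [R wo] := well_ordering_principle {classic T}.
have woT : wo_chain R predT by apply: withinW.
exists (fun a b => R a b); split.
- by move=> a b ab ba; apply: (wo_chain_antisymmetric woT) => //; rewrite ab ba.
- move=> P [x Px]; have [|z [[Pz lbz] _]] := wo (fun y => `[< P y >]).
    by exists x; rewrite unfold_in; apply/asboolP.
  exists z; split; first by move: Pz; rewrite unfold_in => /asboolP.
  by move=> y Py; apply: lbz; rewrite unfold_in; apply/asboolP.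
Qed.

End WellOrdering.

Lemma least_nat (P : nat -> Prop) :
  (exists n, P n) -> exists n, P n /\ forall m, P m -> n <= m.
Proof.
  intro HP.
  destruct (dec_inh_nat_subset_has_unique_least_element P (fun n => classic (P n)) HP)
    as [n [[Pn Hn] _]].
  exists n; auto.
Qed.

Lemma finite_by_levels {T : Type} (Q : nat -> T -> Prop) (K : nat) :
  (forall n a b, n < K -> Q n a -> Q n b -> a = b) ->
  exists l : list T, forall n a, n < K -> Q n a -> In a l.
Proof.
  induction K as [|K IH]; intro Huniq.
  - exists nil. intros n a Hn. lia.
  - destruct IH as [l Hl]. { intros n a b Hn. apply Huniq. lia. }
    destruct (classic (exists a0, Q K a0)) as [[a0 Ha0]|Hnone].
    + exists (a0 :: l). intros n a Hn Qa.
      destruct (Nat.eq_dec n K) as [->|Hne].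
      * left. apply (Huniq K); auto.
      * right. apply (Hl n); auto. lia.
    + exists l. intros n a Hn Qa.
      destruct (Nat.eq_dec n K) as [->|Hne].
      * exfalso. apply Hnone. exists a; exact Qa.
      * apply (Hl n); auto. lia.
Qed.

Lemma set_ext {X : Type} (A B : set X) : (forall x, A x <-> B x) -> A = B.
Proof.
  intro H. apply functional_extensionality. intro x.
  apply propositional_extensionality. apply H.
Qed.

Lemma open_ext {X : Type} (t : topology X) (A B : set X) :
  (forall x, A x <-> B x) -> is_open t A -> is_open t B.
Proof. intros H HA. rewrite <- (set_ext A B H). exact HA. Qed.

Lemma open_indexed_union {X I : Type} (t : topology X) (P : I -> Prop) (A : I -> set X) :
  (forall i, P i -> is_open t (A i)) -> is_open t (fun z => exists i, P i /\ A i z).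
Proof.
  intro HA.
  apply (open_ext t (fun z => exists B, (exists i, P i /\ B = A i) /\ B z)).
  - intro z; split.
    + intros [B [[i [Pi ->]] Bz]]. exists i; auto.
    + intros [i [Pi Az]]. exists (A i). split; auto. exists i; auto.
  - apply open_union. intros B [i [Pi ->]]. auto.
Qed.

Lemma star_open {X : Type} (t : topology X) (W : set X -> Prop) (A : set X) :
  (forall B, W B -> is_open t B) -> is_open t (star A W).
Proof.
  intro HW.
  apply (open_ext t (fun z => exists B, (W B /\ meets B A) /\ B z)).
  - intro z; unfold star; split; intros [B HB]; exists B; tauto.
  - apply open_union. intros B [HB _]; auto.
Qed.

Lemma star_incl {X : Type} (W : set X -> Prop) (A : set X) :
  (forall x, exists B, W B /\ B x) -> subset A (star A W).
Proof.
  intros HW x Ax. destruct (HW x) as [B [WB Bx]].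
  exists B. split; auto. split; auto. exists x; auto.
Qed.

Lemma star_mono {X : Type} (W : set X -> Prop) (A A' : set X) :
  subset A A' -> subset (star A W) (star A' W).
Proof.
  intros HA z [B [WB [[y [By Ay]] Bz]]].
  exists B. split; auto. split; auto. exists y; auto.
Qed.

Lemma star_refine {X : Type} (W W' : set X -> Prop) (A : set X) :
  (forall B, W B -> exists C, W' C /\ subset B C) -> subset (star A W) (star A W').
Proof.
  intros HR z [B [WB [[y [By Ay]] Bz]]]. destruct (HR B WB) as [C [WC BC]].
  exists C. split; auto. split; auto. exists y; auto.
Qed.

Lemma star_sym {X : Type} (W : set X -> Prop) (a b : X) :
  star (singleton a) W b -> star (singleton b) W a.
Proof.
  intros [B [WB [[y [By ->]] Bb]]].
  exists B. split; auto. split; auto. exists b; split; auto. reflexivity.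
Qed.

Lemma star_step {X : Type} (W : set X -> Prop) (A : set X) (a b : X) :
  A a -> star (singleton a) W b -> star A W b.
Proof.
  intros Aa [B [WB [[y [By ->]] Bb]]].
  exists B. split; auto. split; auto. exists a; auto.
Qed.

Lemma star_chain {X : Type} (W : set X -> Prop) (p q z : X) :
  star (singleton p) W z -> star (singleton q) W z -> star (star (singleton p) W) W q.
Proof. intros Hp Hq. apply (star_step W _ z q Hp). apply star_sym; auto. Qed.

Lemma star_chain4 {X : Type} (W : set X -> Prop) (x y w z1 z2 : X) :
  star (singleton x) W z1 -> star (singleton w) W z1 ->
  star (singleton w) W z2 -> star (singleton y) W z2 ->
  star (star (star (star (singleton x) W) W) W) W y.
Proof.
  intros H1 H2 H3 H4.
  assert (Hw : star (star (singleton x) W) W w) by (apply (star_chain W x w z1); auto).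
  assert (Hz2 : star (star (star (singleton x) W) W) W z2) by (apply (star_step W _ w z2); auto).
  apply (star_step W _ z2 y); auto. apply star_sym; auto.
Qed.

Fixpoint meet_cover {X : Type} (W : nat -> set X -> Prop) (n : nat) : set X -> Prop :=
  match n with
  | 0 => W 0
  | S m => fun B => exists A C, meet_cover W m A /\ W (S m) C /\ B = (fun x => A x /\ C x)
  end.

Lemma meet_cover_open_cover {X : Type} (t : topology X) (W : nat -> set X -> Prop) :
  (forall i, open_cover t (W i)) -> forall n, open_cover t (meet_cover W n).
Proof.
  intros HW n. induction n as [|n [IHopen IHcover]]; simpl.
  - apply HW.
  - split.
    + intros B [A [C [GA [WC ->]]]]. apply open_inter; auto. apply (proj1 (HW (S n))); auto.
    + intro x. destruct (IHcover x) as [A [GA Ax]].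
      destruct (proj2 (HW (S n)) x) as [C [WC Cx]].
      exists (fun x => A x /\ C x). split; auto. exists A, C; auto.
Qed.

Lemma meet_cover_refines {X : Type} (W : nat -> set X -> Prop) (m n : nat) (B : set X) :
  m <= n -> meet_cover W n B -> exists A, meet_cover W m A /\ subset B A.
Proof.
  intro Hle. revert B. induction Hle as [|n Hle IH]; intros B HB.
  - exists B; split; auto. intros x Hx; auto.
  - destruct HB as [A [C [GA [WC ->]]]]. destruct (IH A GA) as [A' [GA' HA']].
    exists A'; split; auto. intros x [Ax _]; auto.
Qed.

Lemma meet_cover_refines_W {X : Type} (W : nat -> set X -> Prop) (i n : nat) (B : set X) :
  i <= n -> meet_cover W n B -> exists C, W i C /\ subset B C.
Proof.
  intros Hle HB. destruct (meet_cover_refines W i n B Hle HB) as [A [GA BA]].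
  assert (HA : exists C, W i C /\ subset A C).
  { destruct i as [|i]; simpl in GA.
    - exists A; split; auto. intros x Hx; auto.
    - destruct GA as [A1 [C [_ [WC ->]]]]. exists C; split; auto. intros x [_ Hx]; auto. }
  destruct HA as [C [WC AC]]. exists C; split; auto. intros x Bx; auto.
Qed.

Definition sigma {X : Type} (W : nat -> set X -> Prop) (n : nat) (A : set X) : set X :=
  star A (meet_cover W n).

Lemma sigma_antitone {X : Type} (W : nat -> set X -> Prop) (m n : nat) (A : set X) :
  m <= n -> subset (sigma W n A) (sigma W m A).
Proof. intro H. apply star_refine. intros B HB. apply (meet_cover_refines W m n B H HB). Qed.

Lemma sigma_sub_star {X : Type} (W : nat -> set X -> Prop) (i n : nat) (A : set X) :
  i <= n -> subset (sigma W n A) (star A (W i)).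
Proof. intro H. apply star_refine. intros B HB. apply (meet_cover_refines_W W i n B H HB). Qed.

Lemma sigma_iter_mono {X : Type} (W : nat -> set X -> Prop) (k n : nat) (A B : set X) :
  subset A B -> subset (Nat.iter k (sigma W n) A) (Nat.iter k (sigma W n) B).
Proof. intro H. induction k as [|k IH]; simpl; auto. apply star_mono; auto. Qed.

(* Completion of a family of open sets that covers the non-isolated points and
   is locally finite at them: trim it to the open set of points where it is
   locally finite, then add the singletons of the points it no longer covers. *)

Definition finite_meets {X : Type} (F : set X -> Prop) (N : set X) : Prop :=
  exists l : list (set X), forall A, F A -> meets A N -> In A l.

Definition locally_finite_at {X : Type} (t : topology X) (F : set X -> Prop) (x : X) : Prop :=
  exists N, is_open t N /\ N x /\ finite_meets F N.

Section Completion.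

Variables (X : Type) (t : topology X) (F : set X -> Prop).
Hypothesis F_open : forall A, F A -> is_open t A.
Hypothesis F_covers : forall x, ~ isolated t x -> exists A, F A /\ A x.
Hypothesis F_locally_finite : forall x, ~ isolated t x -> locally_finite_at t F x.

Definition finite_part : set X := fun z => exists N, (is_open t N /\ finite_meets F N) /\ N z.

Definition trimmed (B : set X) : Prop := exists A, F A /\ B = (fun z => A z /\ finite_part z).

Definition trimmed_covered (z : X) : Prop := exists B, trimmed B /\ B z.

Definition completion (B : set X) : Prop :=
  trimmed B \/ exists w, isolated t w /\ ~ trimmed_covered w /\ B = singleton w.

Lemma finite_part_open : is_open t finite_part.
Proof. apply open_union. intros N [HN _]. exact HN. Qed.

Lemma trimmed_open (B : set X) : trimmed B -> is_open t B.
Proof.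
  intros [A [FA ->]]. apply open_inter; [apply F_open; auto|apply finite_part_open].
Qed.

Lemma uncovered_isolated (z : X) : ~ trimmed_covered z -> isolated t z.
Proof.
  intro Hz. apply NNPP. intro Hiso. apply Hz.
  destruct (F_covers z Hiso) as [A [FA Az]].
  destruct (F_locally_finite z Hiso) as [N [HN [Nz HfinN]]].
  exists (fun y => A y /\ finite_part y). split; [exists A; auto|].
  split; auto. exists N; auto.
Qed.

Lemma completion_open_cover : open_cover t completion.
Proof.
  split.
  - intros B [HB|[w [Hw [_ ->]]]]; [apply trimmed_open; auto|exact Hw].
  - intro z. destruct (classic (trimmed_covered z)) as [[B [HB Bz]]|Hz].
    + exists B. split; auto. left; auto.
    + exists (singleton z). split; [|reflexivity].
      right. exists z. split; auto. apply uncovered_isolated; auto.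
Qed.

(* Around a covered point z, the set N ∩ B, with B a trimmed member through z
   and N witnessing z in the finite part, meets only finitely many members. *)
Lemma completion_locally_finite_covered (z : X) :
  trimmed_covered z -> locally_finite_at t completion z.
Proof.
  intros [B0 [HB0 B0z]].
  assert (Hz := B0z). destruct HB0 as [A0 [FA0 ->]]. destruct Hz as [_ [N [[HN [l Hl]] Nz]]].
  exists (fun y => N y /\ (A0 y /\ finite_part y)).
  split; [apply open_inter; auto; apply trimmed_open; exists A0; auto|split; auto].
  exists (map (fun A y => A y /\ finite_part y) l).
  intros B [[A [FA ->]]|[w [_ [Hw ->]]]] [y [By [Ny HyB0]]].
  - apply (in_map (fun A y => A y /\ finite_part y)). apply Hl; auto.
    exists y. split; [apply By|exact Ny].
  - exfalso. apply Hw. rewrite By in HyB0.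
    exists (fun y => A0 y /\ finite_part y). split; auto. exists A0; auto.
Qed.

Lemma completion_locally_finite : locally_finite t completion.
Proof.
  intro z. destruct (classic (trimmed_covered z)) as [Hz|Hz].
  - apply completion_locally_finite_covered; auto.
  - exists (singleton z). split; [apply uncovered_isolated; auto|split; [reflexivity|]].
    exists (singleton z :: nil).
    intros B [HB|[w [_ [_ ->]]]] [y [By ->]].
    + exfalso. apply Hz. exists B; auto.
    + left. rewrite By. reflexivity.
Qed.

Lemma locally_finite_completion :
  exists V, open_cover t V /\ locally_finite t V /\
    forall B, V B -> (exists A, F A /\ subset B A) \/ (exists w, B = singleton w).
Proof.
  exists completion. split; [apply completion_open_cover|].
  split; [apply completion_locally_finite|].
  intros B [[A [FA ->]]|[w [_ [_ ->]]]].
  - left. exists A. split; auto. intros x [Ax _]; exact Ax.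
  - right. exists w; reflexivity.
Qed.

End Completion.

(* (W_i) is a sequence of open covers with the shrinking property of a strong
   development at the non-isolated points. *)
Section Development.

Variables (X : Type) (t : topology X) (W : nat -> set X -> Prop).
Hypothesis W_cover : forall i, open_cover t (W i).
Hypothesis W_shrinks : forall x, ~ isolated t x ->
  forall U, is_open t U -> U x ->
  exists V i, is_open t V /\ V x /\ subset (star V (W i)) U.

Lemma sigma_open (n : nat) (A : set X) : is_open t (sigma W n A).
Proof. apply star_open. apply (proj1 (meet_cover_open_cover t W W_cover n)). Qed.

Lemma sigma_incl (n : nat) (A : set X) : subset A (sigma W n A).
Proof. apply star_incl. apply (proj2 (meet_cover_open_cover t W W_cover n)). Qed.

Lemma sigma_center (n : nat) (x : X) : sigma W n (singleton x) x.
Proof. apply sigma_incl. reflexivity. Qed.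

Lemma sigma_iter_shrinks_open (k : nat) (U : set X) (x : X) :
  ~ isolated t x -> is_open t U -> U x ->
  exists V N, is_open t V /\ V x /\
    forall n, N <= n -> subset (Nat.iter k (sigma W n) V) U.
Proof.
  revert U. induction k as [|k IH]; intros U Hx HU Ux.
  - exists U, 0. split; auto. split; auto. intros n _ z Hz; auto.
  - destruct (W_shrinks x Hx U HU Ux) as [V' [i [HV' [V'x HV'U]]]].
    destruct (IH V' Hx HV' V'x) as [V [N [HV [Vx HVV']]]].
    exists V, (Nat.max N i). split; auto. split; auto. intros n Hn z Hz.
    apply HV'U. apply (sigma_sub_star W i n V'); [lia|].
    apply (star_mono _ (Nat.iter k (sigma W n) V) V'); auto. apply HVV'. lia.
Qed.

Lemma sigma_iter_shrinks (k : nat) (U : set X) (x : X) :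
  ~ isolated t x -> is_open t U -> U x ->
  exists N, forall n, N <= n -> subset (Nat.iter k (sigma W n) (singleton x)) U.
Proof.
  intros Hx HU Ux. destruct (sigma_iter_shrinks_open k U x Hx HU Ux) as [V [N [_ [Vx HN]]]].
  exists N. intros n Hn z Hz. apply (HN n Hn).
  revert z Hz. apply sigma_iter_mono. intros y ->; auto.
Qed.

Definition separating (p : X) (C : set X) (n : nat) : Prop :=
  forall z, sigma W n (sigma W n (singleton p)) z -> ~ C z.

Definition least_separating (p : X) (C : set X) (n : nat) : Prop :=
  separating p C n /\ forall m, separating p C m -> n <= m.

Lemma least_separating_exists (p : X) (C : set X) :
  is_closed t C -> ~ C p -> ~ isolated t p -> exists n, least_separating p C n.
Proof.
  intros HC Cp Hp. apply least_nat.
  destruct (sigma_iter_shrinks 2 (setC C) p Hp HC Cp) as [N HN].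
  exists N. intros z Hz. apply (HN N (le_n N) z Hz).
Qed.

Definition mn_operator (p : X) (C : set X) : set X :=
  fun z => (isolated t p /\ z = p) \/
           (~ isolated t p /\ exists n, least_separating p C n /\ sigma W n (singleton p) z).

Lemma mn_operator_open (p : X) (C : set X) : is_open t (mn_operator p C).
Proof.
  destruct (classic (isolated t p)) as [Hp|Hp].
  - apply (open_ext t (singleton p)); [|exact Hp].
    intro z; unfold mn_operator, singleton; tauto.
  - apply (open_ext t (fun z => exists n, least_separating p C n /\ sigma W n (singleton p) z)).
    + intro z; unfold mn_operator; tauto.
    + apply open_indexed_union. intros n _. apply sigma_open.
Qed.

Lemma mn_operator_center (p : X) (C : set X) :
  is_closed t C -> ~ C p -> mn_operator p C p.
Proof.
  intros HC Cp. destruct (classic (isolated t p)) as [Hp|Hp].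
  - left; auto.
  - right. split; auto. destruct (least_separating_exists p C HC Cp Hp) as [n Hn].
    exists n. split; auto. apply sigma_center.
Qed.

Lemma mn_operator_avoids (p : X) (C : set X) :
  ~ C p -> subset (mn_operator p C) (setC C).
Proof.
  intros Cp z [[_ ->]|[_ [n [[Hsep _] Hz]]]]; auto.
  apply Hsep. apply sigma_incl; auto.
Qed.

(* Shrinking C can only lower the least separating stage. *)
Lemma mn_operator_monotone (p : X) (C D : set X) :
  is_closed t D -> ~ D p -> subset D C ->
  subset (mn_operator p C) (mn_operator p D).
Proof.
  intros HD Dp DC z [Hiso|[Hp [n [[Hsep _] Hz]]]]; [left; auto|right].
  split; auto. destruct (least_separating_exists p D HD Dp Hp) as [n' [Hsep' Hleast']].
  exists n'. split; [split; auto|].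
  apply (sigma_antitone W n' n); auto.
  apply Hleast'. intros y Hy Dy. apply (Hsep y Hy). auto.
Qed.

(* Axiom (iii): if the smaller of the two stages is n, a common point of
   σ_n({p}) and σ_n({q}) puts q in σ_n(σ_n({p})). *)
Lemma mn_operator_disjoint (p q : X) :
  p <> q -> forall z, ~ (mn_operator p (singleton q) z /\ mn_operator q (singleton p) z).
Proof.
  intros Hpq z [[[_ Hzp]|[_ [n [[Hsepn _] Hzn]]]] [[_ Hzq]|[_ [m [[Hsepm _] Hzm]]]]].
  - congruence.
  - subst z. apply (Hsepm p); [apply sigma_incl; auto|reflexivity].
  - subst z. apply (Hsepn q); [apply sigma_incl; auto|reflexivity].
  - destruct (le_ge_dec n m) as [Hnm|Hmn].
    + apply (Hsepn q); [|reflexivity]. apply (star_chain _ p q z); auto.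
      apply (sigma_antitone W n m); auto.
    + apply (Hsepm p); [|reflexivity]. apply (star_chain _ q p z); auto.
      apply (sigma_antitone W m n); auto.
Qed.

Lemma development_monotonically_normal : monotonically_normal t.
Proof.
  exists mn_operator. split; [|split].
  - intros p C HC Cp. split; [apply mn_operator_open|].
    split; [apply mn_operator_center|apply mn_operator_avoids]; auto.
  - intros p C D _ Cp HD DC. apply mn_operator_monotone; auto.
  - exact mn_operator_disjoint.
Qed.

Section Pieces.

Variables (U : set X -> Prop) (R : set X -> set X -> Prop).
Hypothesis U_cover : open_cover t U.
Hypothesis R_antisym : forall a b, R a b -> R b a -> a = b.
Hypothesis R_least : forall P : set X -> Prop,
  (exists s, P s) -> exists s0, P s0 /\ forall s, P s -> R s0 s.

Definition first_member (s : set X) (x : X) : Prop :=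
  U s /\ s x /\ forall s', U s' -> s' x -> R s s'.

Lemma first_member_exists (x : X) : exists s, first_member s x.
Proof.
  destruct (R_least (fun s => U s /\ s x)) as [s [[Us sx] Hleast]].
  { destruct (proj2 U_cover x) as [A [UA Ax]]. exists A; auto. }
  exists s. split; [exact Us|split; [exact sx|]]. intros s' Us' s'x. apply Hleast; auto.
Qed.

Lemma first_member_eq (s s' : set X) (x y : X) :
  first_member s x -> first_member s' y -> s y -> s' x -> s = s'.
Proof.
  intros [Us [_ Hx]] [Us' [_ Hy]] sy s'x. apply R_antisym; auto.
Qed.

Definition eligible (B : set X) (n : nat) (s : set X) (x : X) : Prop :=
  first_member s x /\ ~ B x /\ subset (Nat.iter 4 (sigma W n) (singleton x)) s.

Definition piece (B : set X) (n : nat) (s : set X) : set X :=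
  fun z => exists x, eligible B n s x /\ sigma W n (singleton x) z.

Fixpoint covered_before (n : nat) : set X :=
  match n with
  | 0 => fun _ => False
  | S m => fun z => covered_before m z \/ exists s, piece (covered_before m) m s z
  end.

Definition stage_piece (n : nat) (s : set X) : set X := piece (covered_before n) n s.

Lemma covered_before_iff (n : nat) (z : X) :
  covered_before n z <-> exists j s, j < n /\ stage_piece j s z.
Proof.
  induction n as [|n IH]; simpl.
  - split; [tauto|]. intros [j [s [H _]]]; lia.
  - rewrite IH. split.
    + intros [[j [s [Hj H]]]|[s H]]; [exists j, s; split; auto; lia|exists n, s; auto].
    + intros [j [s [Hj H]]]. destruct (Nat.eq_dec j n) as [->|Hne].
      * right; exists s; auto.
      * left; exists j, s; split; auto; lia.
Qed.

Lemma stage_piece_open (n : nat) (s : set X) : is_open t (stage_piece n s).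
Proof.
  apply (open_indexed_union t (eligible (covered_before n) n s) (fun x => sigma W n (singleton x))).
  intros x _. apply sigma_open.
Qed.

Lemma stage_piece_sub (n : nat) (s : set X) : subset (stage_piece n s) s.
Proof.
  intros z [x [[_ [_ H4]] Hz]]. apply H4. simpl. apply sigma_incl, sigma_incl, sigma_incl, Hz.
Qed.

(* Every non-isolated x lies in some piece: if it is not covered by stage N,
   where σ_N^4({x}) ⊆ s(x), it is eligible at stage N. *)
Lemma stage_pieces_cover (x : X) :
  ~ isolated t x -> exists n s, U s /\ stage_piece n s x.
Proof.
  intro Hx. destruct (first_member_exists x) as [s Hs].
  destruct (sigma_iter_shrinks 4 s x Hx (proj1 U_cover s (proj1 Hs)) (proj1 (proj2 Hs))) as [N HN].
  destruct (classic (covered_before N x)) as [Hb|Hb].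
  - apply covered_before_iff in Hb. destruct Hb as [j [s' [_ Hj]]].
    exists j, s'. split; auto. destruct Hj as [y [[[Us' _] _] _]]; exact Us'.
  - exists N, s. split; [apply Hs|]. exists x. split; [|apply sigma_center].
    split; [exact Hs|split; [exact Hb|apply HN, le_n]].
Qed.

Lemma stage_piece_unique (n : nat) (s s' : set X) (w : X) :
  meets (stage_piece n s) (sigma W n (singleton w)) ->
  meets (stage_piece n s') (sigma W n (singleton w)) -> s = s'.
Proof.
  intros [z1 [[x [[Hx [_ Hx4]] Hz1x]] Hz1w]] [z2 [[y [[Hy [_ Hy4]] Hz2y]] Hz2w]].
  apply (first_member_eq s s' x y); auto.
  - apply Hx4. apply (star_chain4 _ x y w z1 z2); auto.
  - apply Hy4. apply (star_chain4 _ y x w z2 z1); auto.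
Qed.

Definition pieces (A : set X) : Prop := exists n s, U s /\ A = stage_piece n s.

(* Local finiteness at a non-isolated w: if σ_N^2({w}) lies in a piece of stage
   j, then M = σ_K({w}) with K = max N (j+1) meets no piece of stage >= K and at
   most one piece of each stage < K. *)
Lemma pieces_locally_finite (w : X) :
  ~ isolated t w -> locally_finite_at t pieces w.
Proof.
  intro Hw. destruct (stage_pieces_cover w Hw) as [j [s [_ Hjs]]].
  destruct (sigma_iter_shrinks 2 (stage_piece j s) w Hw (stage_piece_open j s) Hjs) as [N HN].
  set (K := Nat.max N (S j)).
  set (M := sigma W K (singleton w)).
  assert (Hlate : forall n s', K <= n -> ~ meets (stage_piece n s') M).
  { intros n s' Hn [z [[y [[_ [Hy _]] Hzy]] HzM]]. apply Hy, covered_before_iff.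
    exists j, s. split; [lia|]. apply (HN K); [lia|]. simpl.
    apply (star_chain _ w y z); auto. apply (sigma_antitone W K n); auto. }
  assert (Hearly : exists l : list (set X), forall n A, n < K ->
            (exists s', U s' /\ A = stage_piece n s' /\ meets A M) -> In A l).
  { apply finite_by_levels.
    intros n A B Hn [sA [_ [-> [zA [HzA HzAM]]]]] [sB [_ [-> [zB [HzB HzBM]]]]].
    f_equal. apply (stage_piece_unique n sA sB w).
    - exists zA. split; auto. apply (sigma_antitone W n K); [lia|exact HzAM].
    - exists zB. split; auto. apply (sigma_antitone W n K); [lia|exact HzBM]. }
  destruct Hearly as [l Hl].
  exists M. split; [apply sigma_open|split; [apply sigma_center|]].
  exists l. intros A [n [s' [Us' ->]]] HAM. apply (Hl n); [|exists s'; auto].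
  destruct (le_lt_dec K n) as [HK|HK]; auto. exfalso; apply (Hlate n s' HK HAM).
Qed.

Lemma pieces_refinement :
  exists V, open_cover t V /\ locally_finite t V /\
    forall B, V B -> exists A, U A /\ subset B A.
Proof.
  destruct (locally_finite_completion X t pieces) as [V [HVcov [HVfin HVref]]].
  - intros A [n [s [_ ->]]]. apply stage_piece_open.
  - intros x Hx. destruct (stage_pieces_cover x Hx) as [n [s [Us Hns]]].
    exists (stage_piece n s). split; auto. exists n, s; auto.
  - apply pieces_locally_finite.
  - exists V. split; auto. split; auto.
    intros B HB. destruct (HVref B HB) as [[A [[n [s [Us ->]]] BA]]|[w ->]].
    + exists s. split; auto. intros x Bx. apply (stage_piece_sub n s), BA, Bx.
    + destruct (proj2 U_cover w) as [C [UC Cw]].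
      exists C. split; auto. intros x ->; exact Cw.
Qed.

End Pieces.

Lemma development_paracompact : paracompact t.
Proof.
  intros U HU. destruct (WellOrdering.well_ordering (set X)) as [R [Hanti Hleast]].
  apply (pieces_refinement U R); auto.
Qed.

End Development.

Theorem mainTheorem4 (X : Type) (t : topology X) :
  T1 t -> has_strong_development_nonisolated t ->
  monotonically_normal t /\ paracompact t.
Proof.
  intros _ [W [HWcover [_ HWshrinks]]]. split.
  - exact (development_monotonically_normal X t W HWcover HWshrinks).
  - exact (development_paracompact X t W HWcover HWshrinks).
Qed.
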